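(* Fix $p\ge3$. For $(\beta,h)\in[0,\infty)\times\mathbb R$: (1) $\sup_{x\in[-1,1]}H_{\beta,h,p}(x)\ge0$, with equality if and only if $(\beta,h)\in[0,\tilde\beta_p]\times\{0\}$. (2) Every local maximizer of $H_{\beta,h,p}$ on $[-1,1]$ lies in $(-1,1)$. (3) $H_{\beta,h,p}$ has at most two local maximizers if $p=3$ and at most three local maximizers if $p\ge4$. Moreover, $H_{\beta,h,p}$ has three global maximizers if and only if $p\ge4$ is even, $h=0$ and $\beta=\tilde\beta_p$.
   Context: $I(x)=\frac12[(1+x)\log(1+x)+(1-x)\log(1-x)]$ on $[-1,1]$ and $H_{\beta,h,p}(x)=\beta x^p+hx-I(x)$. $\tilde\beta_p=\sup\{\beta\ge0:\sup_{x\in[-1,1]}H_{\beta,0,p}(x)=0\}$. A global maximizer is a point where $H_{\beta,h,p}$ attains its supremum over $[-1,1]$. *)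

From Stdlib Require Import Reals.
From Coquelicot Require Import Coquelicot.
Open Scope R_scope.

(* I(x) = 1/2[(1+x)log(1+x) + (1-x)log(1-x)], with the convention 0 log 0 = 0
   (automatic here: 0 * ln 0 = 0). *)
Definition Ifun (x : R) : R :=
  / 2 * ((1 + x) * ln (1 + x) + (1 - x) * ln (1 - x)).

Definition H (beta h : R) (p : nat) (x : R) : R :=
  beta * x ^ p + h * x - Ifun x.

Definition in11 (x : R) : Prop := -1 <= x <= 1.

Definition Hsup (beta h : R) (p : nat) : Rbar :=
  Lub_Rbar (fun y => exists x, in11 x /\ y = H beta h p x).

Definition beta_tilde (p : nat) : Rbar :=
  Lub_Rbar (fun b => 0 <= b /\ Hsup b 0 p = Finite 0).

Definition local_max (beta h : R) (p : nat) (x : R) : Prop :=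
  in11 x /\ exists eps, 0 < eps /\
    forall y, in11 y -> Rabs (y - x) < eps -> H beta h p y <= H beta h p x.

Definition global_max (beta h : R) (p : nat) (x : R) : Prop :=
  in11 x /\ forall y, in11 y -> H beta h p y <= H beta h p x.

From Stdlib Require Import Reals List Lra Lia.
From Coquelicot Require Import Coquelicot.
Open Scope R_scope.

(* Everything reduces to counting zeros of derivatives.
   - A generic counting layer: [atmost P n] ("at most n points satisfy P"), a
     counting form of Rolle's theorem, and the fact that n+1 local maxima of a
     differentiable function whose derivative has finitely many zeros yield
     2n+1 critical points in their hull.
   - Writing p = 3 + q, (1 - x^2) H''(x) = N(x) = p(p-1) beta x^(p-2) (1-x^2) - 1,
     and N' vanishes on each side of 0 only where x^2 = (p-2)/p.  Hence N has at
     most two zeros on each side of 0 (none on (-1,0) if p is odd), and H' has at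
     most 3 (p odd) or 5 (p even) zeros in (-1,1) and at most 3 in [0,1).  This
     bounds the number of local maxima in (3).
   - (2): I' = artanh blows up at 1, so neither endpoint is a local maximum.
   - (1): c = min over [1/2,1] of I(x)/x^p satisfies I(x) >= c x^p on (0,1], with
     equality at some m; hence sup H(beta,0) = 0 iff beta <= c, so beta_tilde = c,
     while a field h <> 0 makes H positive near 0.
   - Three global maximizers force p even (by the count), then h = 0 (otherwise
     all of them lie in (0,1) after a reflection, too many local maxima there),
     then maximal value 0 (for h = 0 there is at most one local maximum in (0,1)),
     which pins beta = c.  Conversely 0, m, -m are global maximizers at beta = c. *)

Definition atmost (P : R -> Prop) (n : nat) : Prop :=
  forall l, NoDup l -> (forall x, In x l -> P x) -> (length l <= n)%nat.

Lemma atmost_weaken (P Q : R -> Prop) m n :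
  (forall x, P x -> Q x) -> (m <= n)%nat -> atmost Q m -> atmost P n.
Proof. intros HPQ Hmn HQ l Hnd Hl. specialize (HQ l Hnd (fun x Hx => HPQ x (Hl x Hx))). lia. Qed.

Lemma atmost_none (P : R -> Prop) : (forall x, ~ P x) -> atmost P 0.
Proof.
  intros Hn l _ Hl. destruct l as [|x l]; simpl; [lia|].
  exfalso; apply (Hn x), Hl; left; reflexivity.
Qed.

Lemma atmost_unique (P : R -> Prop) : (forall x y, P x -> P y -> x = y) -> atmost P 1.
Proof.
  intros Hu l Hnd Hl. destruct l as [|x [|y l]]; simpl; try lia.
  exfalso. inversion Hnd as [|? ? Hx _]; subst.
  apply Hx. left. apply Hu; apply Hl; simpl; auto.
Qed.

Lemma atmost_split_sign (P : R -> Prop) n1 n2 :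
  atmost (fun x => P x /\ x < 0) n1 -> atmost (fun x => P x /\ 0 < x) n2 ->
  (forall x, P x -> x <> 0) -> atmost P (n1 + n2).
Proof.
  intros Hneg Hpos H0 l Hnd Hl.
  set (f := fun x => if Rlt_dec x 0 then true else false).
  rewrite <- (filter_length f l).
  assert (length (filter f l) <= n1)%nat.
  { apply Hneg; [apply NoDup_filter; auto|]. intros x Hx. apply filter_In in Hx as [Hx Hf].
    unfold f in Hf. destruct (Rlt_dec x 0); [auto|discriminate]. }
  assert (length (filter (fun x => negb (f x)) l) <= n2)%nat.
  { apply Hpos; [apply NoDup_filter; auto|]. intros x Hx. apply filter_In in Hx as [Hx Hf].
    unfold f in Hf. destruct (Rlt_dec x 0); [discriminate|].
    specialize (H0 x (Hl x Hx)). split; [auto|lra]. }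
  lia.
Qed.

Lemma atmost_remove_point (P : R -> Prop) x0 n :
  P x0 -> atmost P (S n) -> atmost (fun x => P x /\ x <> x0) n.
Proof.
  intros Hx0 HP l Hnd Hl.
  assert (length (x0 :: l) <= S n)%nat; [|simpl in *; lia].
  apply HP.
  - constructor; [|auto]. intros Hin. apply (proj2 (Hl x0 Hin)). reflexivity.
  - intros x [<-|Hx]; [auto|apply Hl; auto].
Qed.

(* A function with finitely many zeros on (a,b) vanishes identically on no
   subinterval: take [n+1] equally spaced points of (u,v). *)
Lemma atmost_nonzero_point (g : R -> R) a b n :
  atmost (fun x => a < x < b /\ g x = 0) n ->
  forall u v, a <= u -> u < v -> v <= b -> exists z, u < z < v /\ g z <> 0.
Proof.
  intros Ha u v Hau Huv Hvb.
  destruct (Classical_Prop.classic (exists z, u < z < v /\ g z <> 0)) as [?|Hn]; [auto|].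
  exfalso.
  set (pt := fun i : nat => u + (v - u) * INR (S i) / INR (n + 2)).
  assert (Hpos : 0 < INR (n + 2)) by (apply lt_0_INR; lia).
  assert (Hin : forall i, (i < n + 1)%nat -> u < pt i < v).
  { intros i Hi. unfold pt.
    assert (0 < INR (S i)) by (apply lt_0_INR; lia).
    assert (INR (S i) < INR (n + 2)) by (apply lt_INR; lia).
    split.
    - assert (0 < (v - u) * INR (S i) / INR (n + 2)); [|lra].
      apply Rdiv_lt_0_compat; [apply Rmult_lt_0_compat|]; lra.
    - assert ((v - u) * INR (S i) / INR (n + 2) < v - u); [|lra].
      apply (Rmult_lt_reg_r (INR (n + 2))); [lra|].
      unfold Rdiv. rewrite Rmult_assoc, Rinv_l, Rmult_1_r by lra.
      apply Rmult_lt_compat_l; lra. }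
  assert (Hinj : forall i j, pt i = pt j -> i = j).
  { intros i j Hij. unfold pt, Rdiv in Hij.
    assert (E : (v - u) * / INR (n + 2) * (INR (S i) - INR (S j)) = 0) by lra.
    apply Rmult_integral in E as [E|E].
    - apply Rmult_integral in E as [E|E]; [lra|].
      exfalso; apply (Rinv_neq_0_compat (INR (n + 2))); lra.
    - assert (E2 : INR (S i) = INR (S j)) by lra. apply INR_eq in E2. lia. }
  assert (Hlen : (length (map pt (seq 0 (n + 1))) <= n)%nat).
  { apply Ha.
    - apply NoDup_map_NoDup_ForallPairs; [intros i j _ _; apply Hinj| apply seq_NoDup].
    - intros x Hx. apply in_map_iff in Hx as [i [<- Hi]]. apply in_seq in Hi.
      specialize (Hin i ltac:(lia)). split; [lra|].
      destruct (Req_dec (g (pt i)) 0) as [?|Hg]; [auto|].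
      exfalso; apply Hn; exists (pt i); split; auto. }
  rewrite length_map, length_seq in Hlen. lia.
Qed.

Lemma list_max_exists (l : list R) :
  l <> nil -> exists m, In m l /\ forall x, In x l -> x <= m.
Proof.
  induction l as [|a l IH]; [congruence|]. intros _.
  destruct l as [|b l'].
  - exists a; split; [left; auto|]. intros x [->|[]]; lra.
  - destruct IH as [m [Hm Hmx]]; [discriminate|].
    destruct (Rle_dec a m).
    + exists m; split; [right; auto|]. intros x [->|Hx]; [lra|auto].
    + exists a; split; [left; auto|]. intros x [->|Hx]; [lra|].
      specialize (Hmx x Hx); lra.
Qed.

Lemma remove_max (l : list R) n : NoDup l -> length l = S n ->
  exists m rest, In m l /\ (forall x, In x l -> x <= m) /\ NoDup rest /\
    length rest = n /\ (forall x, In x rest -> In x l /\ x < m).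
Proof.
  intros Hnd Hlen.
  destruct (list_max_exists l) as [m [Hm Hmx]]; [intros ->; discriminate|].
  destruct (in_split _ _ Hm) as [l1 [l2 ->]].
  exists m, (l1 ++ l2). split; [auto|]. split; [auto|].
  split; [eapply NoDup_remove_1; eauto|].
  split; [rewrite length_app in *; simpl in Hlen; lia|].
  intros x Hx.
  assert (Hxl : In x (l1 ++ m :: l2))
    by (apply in_app_or in Hx as [Hx|Hx]; apply in_or_app; [left|right; right]; auto).
  split; [auto|].
  assert (x <> m) by (intros ->; eapply NoDup_remove_2; eauto).
  specialize (Hmx x Hxl); lra.
Qed.

Lemma rolle_zeros (g g' : R -> R) a b :
  (forall x, a < x < b -> derivable_pt_lim g x (g' x)) ->
  forall n l, NoDup l -> length l = S n -> (forall x, In x l -> a < x < b /\ g x = 0) ->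
  exists L, NoDup L /\ length L = n /\ forall y, In y L -> g' y = 0 /\
     (exists x, In x l /\ x < y) /\ (exists x, In x l /\ y < x).
Proof.
  intros Hd n. induction n as [|n IH]; intros l Hnd Hlen Hz.
  - exists nil. split; [constructor|split; [reflexivity|intros y []]].
  - destruct (remove_max l (S n) Hnd Hlen) as [m [rest [Hm [_ [Hnd' [Hlen' Hrest]]]]]].
    destruct (remove_max rest n Hnd' Hlen') as [m2 [_ [Hm2 [Hm2x _]]]].
    destruct (IH rest Hnd' Hlen') as [L [HndL [HlenL HL]]].
    { intros x Hx; apply Hz, Hrest; auto. }
    destruct (Hrest m2 Hm2) as [Hm2l Hm2m].
    destruct (Hz m Hm) as [Hmab Hgm]. destruct (Hz m2 Hm2l) as [Hm2ab Hgm2].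
    destruct (MVT_cor2 g g' m2 m Hm2m) as [c [Hc1 Hc2]]; [intros c Hc; apply Hd; lra|].
    assert (Hgc : g' c = 0).
    { rewrite Hgm, Hgm2 in Hc1. assert (E : g' c * (m - m2) = 0) by lra.
      apply Rmult_integral in E as [E|E]; [auto|lra]. }
    exists (c :: L). split; [|split].
    + constructor; [|auto]. intros HcL. destruct (HL c HcL) as [_ [_ [x [Hx Hcx]]]].
      specialize (Hm2x x Hx); lra.
    + simpl; lia.
    + intros y [<-|Hy].
      * split; [auto|]. split; [exists m2 | exists m]; split; auto; lra.
      * destruct (HL y Hy) as [H1 [[x [Hx1 Hx2]] [x' [Hx'1 Hx'2]]]].
        split; [auto|]. split; [exists x | exists x']; split; auto; apply Hrest; auto.
Qed.

Lemma atmost_rolle (g g' : R -> R) a b c d n :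
  (forall x, a < x < b -> derivable_pt_lim g x (g' x)) ->
  atmost (fun y => c < y < d /\ g' y = 0) n ->
  atmost (fun x => a < x < b /\ c <= x <= d /\ g x = 0) (S n).
Proof.
  intros Hd Ha l Hnd Hl. destruct l as [|x0 l0]; [simpl; lia|].
  destruct (rolle_zeros g g' a b Hd (length l0) (x0 :: l0) Hnd eq_refl)
    as [L [HndL [HlenL HL]]].
  { intros x Hx; destruct (Hl x Hx) as [? [_ ?]]; auto. }
  assert (length L <= n)%nat; [|simpl; lia].
  apply Ha; [auto|]. intros y Hy.
  destruct (HL y Hy) as [H1 [[x [Hx1 Hx2]] [x' [Hx'1 Hx'2]]]].
  destruct (Hl x Hx1) as [_ [? _]]; destruct (Hl x' Hx'1) as [_ [? _]]. split; [lra|auto].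
Qed.

Definition open_local_max (G : R -> R) a b x : Prop := a < x < b /\
  exists eps, 0 < eps /\ forall y, a < y < b -> Rabs (y - x) < eps -> G y <= G x.

Lemma deriv_zero_at_max (G : R -> R) c l a b : a < c < b -> derivable_pt_lim G c l ->
  (forall x, a < x < b -> G x <= G c) -> l = 0.
Proof.
  intros Hc Hd Hm.
  exact (deriv_maximum G a b c (exist _ l Hd) (proj1 Hc) (proj2 Hc)
           (fun x h1 h2 => Hm x (conj h1 h2))).
Qed.

Lemma deriv_zero_at_min (G : R -> R) c l a b : a < c < b -> derivable_pt_lim G c l ->
  (forall x, a < x < b -> G c <= G x) -> l = 0.
Proof.
  intros Hc Hd Hm.
  exact (deriv_minimum G a b c (exist _ l Hd) (proj1 Hc) (proj2 Hc)
           (fun x h1 h2 => Hm x (conj h1 h2))).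
Qed.

Lemma open_local_max_critical (G g : R -> R) a b x :
  (forall y, a < y < b -> derivable_pt_lim G y (g y)) -> open_local_max G a b x -> g x = 0.
Proof.
  intros Hd [Hx [eps [He Hm]]].
  apply (deriv_zero_at_max G x (g x) (Rmax a (x - eps)) (Rmin b (x + eps))).
  - split; [apply Rmax_lub_lt | apply Rmin_glb_lt]; lra.
  - apply Hd; auto.
  - intros y [H1 H2]. pose proof (Rmax_l a (x - eps)). pose proof (Rmax_r a (x - eps)).
    pose proof (Rmin_l b (x + eps)). pose proof (Rmin_r b (x + eps)).
    apply Hm; [lra|]. apply Rabs_def1; lra.
Qed.

Section CriticalPoints.

Variables (G g : R -> R) (a b : R).
Hypothesis G_deriv : forall y, a < y < b -> derivable_pt_lim G y (g y).
Hypothesis g_nonflat :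
  forall s t, a <= s -> s < t -> t <= b -> exists z, s < z < t /\ g z <> 0.

Lemma not_constant_on_interval s t :
  a <= s -> s < t -> t <= b -> ~ (exists K, forall w, s < w < t -> G w = K).
Proof.
  intros Has Hst Htb [K HK]. destruct (g_nonflat s t Has Hst Htb) as [z [Hz Hgz]].
  apply Hgz, (deriv_zero_at_max G z (g z) s t Hz); [apply G_deriv; lra|].
  intros w Hw. rewrite (HK w Hw), (HK z Hz). lra.
Qed.

(* Between two local maxima [G] attains an interior minimum, a critical point. *)
Lemma critical_point_between_maxima u v :
  open_local_max G a b u -> open_local_max G a b v -> u < v ->
  exists y, u < y < v /\ g y = 0.
Proof.
  intros [Hu [eu [Heu Hmu]]] [Hv [ev [Hev Hmv]]] Huv.
  destruct (continuity_ab_min G u v) as [y [Hymin Hy]]; [lra| |].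
  { intros c Hc. apply derivable_continuous_pt. exists (g c). apply G_deriv. lra. }
  assert (Hyi : u < y < v).
  { destruct (Rle_lt_or_eq_dec u y (proj1 Hy)) as [H1|H1];
      destruct (Rle_lt_or_eq_dec y v (proj2 Hy)) as [H2|H2]; try lra; exfalso.
    - subst y. pose proof (Rmax_l u (v - ev)). pose proof (Rmax_r u (v - ev)).
      apply (not_constant_on_interval (Rmax u (v - ev)) v); [lra| apply Rmax_lub_lt; lra| lra|].
      exists (G v). intros w Hw. apply Rle_antisym; [apply Hmv; [lra| apply Rabs_def1; lra]|].
      apply Hymin; lra.
    - subst y. pose proof (Rmin_l v (u + eu)). pose proof (Rmin_r v (u + eu)).
      apply (not_constant_on_interval u (Rmin v (u + eu))); [lra| apply Rmin_glb_lt; lra| lra|].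
      exists (G u). intros w Hw. apply Rle_antisym; [apply Hmu; [lra| apply Rabs_def1; lra]|].
      apply Hymin; lra. }
  exists y. split; [auto|].
  apply (deriv_zero_at_min G y (g y) u v Hyi); [apply G_deriv; lra|].
  intros w Hw; apply Hymin; lra.
Qed.

(* [n+1] local maxima produce [2n+1] critical points (the maxima themselves and
   one point between consecutive maxima), all within their hull. *)
Lemma local_max_critical_points n l :
  NoDup l -> length l = S n -> (forall x, In x l -> open_local_max G a b x) ->
  exists L, NoDup L /\ length L = (2 * n + 1)%nat /\ forall y, In y L -> g y = 0 /\
     (exists x, In x l /\ x <= y) /\ (exists x, In x l /\ y <= x).
Proof.
  revert l. induction n as [|n IH]; intros l Hnd Hlen Hl.
  - destruct l as [|x [|]]; simpl in Hlen; try discriminate.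
    exists (x :: nil). split; [constructor; [intros []|constructor]|]. split; [reflexivity|].
    intros y [<-|[]]. split; [apply (open_local_max_critical G g a b x G_deriv), Hl; left; auto|].
    split; exists x; (split; [left; reflexivity|lra]).
  - destruct (remove_max l (S n) Hnd Hlen) as [m [rest [Hm [_ [Hnd' [Hlen' Hrest]]]]]].
    destruct (remove_max rest n Hnd' Hlen') as [m2 [_ [Hm2 [Hm2x _]]]].
    destruct (IH rest Hnd' Hlen') as [L [HndL [HlenL HL]]].
    { intros x Hx; apply Hl, Hrest; auto. }
    destruct (Hrest m2 Hm2) as [Hm2l Hm2m].
    destruct (critical_point_between_maxima m2 m (Hl m2 Hm2l) (Hl m Hm) Hm2m)
      as [y0 [Hy0 Hgy0]].
    assert (Hgm : g m = 0) by (apply (open_local_max_critical G g a b m G_deriv), Hl; auto).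
    assert (HLle : forall y, In y L -> y <= m2).
    { intros y Hy. destruct (HL y Hy) as [_ [_ [x [Hx1 Hx2]]]]. specialize (Hm2x x Hx1); lra. }
    exists (m :: y0 :: L). split; [|split].
    + constructor; [|constructor; [|auto]].
      * intros [H1|H1]; [lra|]. specialize (HLle m H1); lra.
      * intros H1. specialize (HLle y0 H1); lra.
    + simpl. lia.
    + intros y [<-|[<-|Hy]].
      * split; [auto|]. split; exists m; (split; [auto|lra]).
      * split; [auto|]. split; [exists m2 | exists m]; split; auto; lra.
      * destruct (HL y Hy) as [H1 [[x [Hx1 Hx2]] [x' [Hx'1 Hx'2]]]].
        split; [auto|]. split; [exists x | exists x']; split; auto; apply Hrest; auto.
Qed.

End CriticalPoints.

Lemma local_max_count (G g : R -> R) a b lo hi N k :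
  (forall y, a < y < b -> derivable_pt_lim G y (g y)) ->
  atmost (fun x => a < x < b /\ g x = 0) N ->
  atmost (fun y => lo < y < hi /\ g y = 0) k ->
  forall l, NoDup l -> (forall x, In x l -> open_local_max G a b x /\ lo < x < hi) ->
  (2 * length l <= S k)%nat.
Proof.
  intros Hd HN Hk l Hnd Hl. destruct l as [|x0 l0] eqn:El; [simpl; lia|]. rewrite <- El in *.
  destruct (local_max_critical_points G g a b Hd (atmost_nonzero_point g a b N HN)
              (length l0) l Hnd ltac:(subst; reflexivity) (fun x Hx => proj1 (Hl x Hx)))
    as [L [HndL [HlenL HL]]].
  assert (length L <= k)%nat; [|subst l; simpl in *; lia].
  apply Hk; [auto|]. intros y Hy.
  destruct (HL y Hy) as [Hz [[x [Hx1 Hx2]] [x' [Hx'1 Hx'2]]]].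
  destruct (Hl x Hx1) as [_ ?]. destruct (Hl x' Hx'1) as [_ ?]. split; [lra|auto].
Qed.

Lemma ln_le_sub1 y : 0 < y -> ln y <= y - 1.
Proof.
  intros Hy. rewrite <- (ln_exp (y - 1)). apply ln_le; auto.
  pose proof (exp_ineq1_le (y - 1)). lra.
Qed.

Lemma ln2_pos : 0 < ln 2.
Proof. pose proof ln_lt_2. lra. Qed.

Lemma ln2_lt1 : ln 2 < 1.
Proof.
  rewrite <- (ln_exp 1). apply ln_increasing; [lra|].
  pose proof (exp_ineq1 1 ltac:(lra)). lra.
Qed.

Lemma Ifun_even x : Ifun (- x) = Ifun x.
Proof.
  unfold Ifun. replace (1 - - x) with (1 + x) by ring. replace (1 + - x) with (1 - x) by ring.
  ring.
Qed.

Lemma Ifun_abs x : Ifun (Rabs x) = Ifun x.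
Proof. unfold Rabs. destruct (Rcase_abs x); [apply Ifun_even|auto]. Qed.

Lemma Ifun0 : Ifun 0 = 0.
Proof.
  unfold Ifun. replace (1 + 0) with 1 by ring. replace (1 - 0) with 1 by ring.
  rewrite ln_1. ring.
Qed.

Lemma Ifun1 : Ifun 1 = ln 2.
Proof. unfold Ifun. replace (1 + 1) with 2 by ring. replace (1 - 1) with 0 by ring. field. Qed.

(* Upper bound I(x) <= x^2, from ln y <= y - 1. *)
Lemma Ifun_le_sq x : -1 < x < 1 -> Ifun x <= x ^ 2.
Proof.
  intros Hx. unfold Ifun.
  pose proof (ln_le_sub1 (1 + x) ltac:(lra)). pose proof (ln_le_sub1 (1 - x) ltac:(lra)).
  assert ((1 + x) * ln (1 + x) <= (1 + x) * x) by (apply Rmult_le_compat_l; lra).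
  assert ((1 - x) * ln (1 - x) <= (1 - x) * (- x)) by (apply Rmult_le_compat_l; lra).
  nra.
Qed.

Definition artanh (x : R) : R := / 2 * (ln (1 + x) - ln (1 - x)).

Lemma Ifun_derive x : -1 < x < 1 -> derivable_pt_lim Ifun x (artanh x).
Proof.
  intros Hx. apply is_derive_Reals. unfold Ifun, artanh. auto_derive.
  - repeat split; lra.
  - replace (1 + - x) with (1 - x) by ring. field. lra.
Qed.

(* artanh x >= x on [0,1), since artanh' = 1/(1-x^2) >= 1. *)
Lemma artanh_ge_id x : 0 <= x < 1 -> x <= artanh x.
Proof.
  intros Hx. destruct (Req_dec x 0) as [->|Hx0].
  - unfold artanh. replace (1 + 0) with 1 by ring. replace (1 - 0) with 1 by ring. lra.
  - destruct (MVT_cor2 (fun y => artanh y - y) (fun c => c ^ 2 / (1 - c ^ 2)) 0 x)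
      as [c [Hc1 Hc2]]; [lra| |].
    + intros c Hc. apply is_derive_Reals. unfold artanh. auto_derive.
      * repeat split; lra.
      * field. repeat split; nra.
    + assert (E : artanh 0 = 0).
      { unfold artanh. replace (1 + 0) with 1 by ring. replace (1 - 0) with 1 by ring. lra. }
      assert (0 <= c ^ 2 / (1 - c ^ 2)).
      { apply Rmult_le_pos; [nra|]. apply Rlt_le, Rinv_0_lt_compat. nra. }
      rewrite E in Hc1. nra.
Qed.

(* Lower bound I(x) >= x^2/2, integrating artanh y >= y. *)
Lemma Ifun_ge_half_sq x : -1 < x < 1 -> x ^ 2 / 2 <= Ifun x.
Proof.
  assert (Hpos : forall y, 0 <= y < 1 -> y ^ 2 / 2 <= Ifun y).
  { intros y Hy. destruct (Req_dec y 0) as [->|Hy0]; [rewrite Ifun0; lra|].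
    destruct (MVT_cor2 (fun z => Ifun z - z ^ 2 / 2) (fun z => artanh z - z) 0 y)
      as [c [Hc1 Hc2]]; [lra| |].
    - intros c Hc.
      replace (artanh c - c) with (artanh c - (INR 2 * c ^ 1) / 2) by (simpl; field).
      apply derivable_pt_lim_minus; [apply Ifun_derive; lra|].
      unfold Rdiv. apply derivable_pt_lim_scal_right. apply derivable_pt_lim_pow.
    - rewrite Ifun0 in Hc1. pose proof (artanh_ge_id c ltac:(lra)). nra. }
  intros Hx. destruct (Rle_dec 0 x); [apply Hpos; lra|].
  rewrite <- Ifun_even. replace (x ^ 2) with ((- x) ^ 2) by ring. apply Hpos; lra.
Qed.

Lemma Ifun_pos x : -1 <= x <= 1 -> x <> 0 -> 0 < Ifun x.
Proof.
  intros Hx Hx0.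
  destruct (Req_dec x 1) as [->|H1]; [rewrite Ifun1; apply ln2_pos|].
  destruct (Req_dec x (-1)) as [->|H2].
  { replace (-1) with (- (1)) by ring. rewrite Ifun_even, Ifun1. apply ln2_pos. }
  pose proof (Ifun_ge_half_sq x ltac:(lra)). assert (0 < x ^ 2) by (apply pow2_gt_0; auto).
  lra.
Qed.

(* Continuity of I on (0,1]: at 1 this reduces to continuity of t ln t at 0,
   which follows from |t ln t| <= 2 sqrt t on (0,1]. *)
Definition xlnx (t : R) : R := t * ln t.

Lemma xlnx_bound x : 0 < x <= 1 -> Rabs (xlnx x) <= 2 * sqrt x.
Proof.
  intros Hx. set (s := sqrt x).
  assert (Hs : 0 < s) by (apply sqrt_lt_R0; lra).
  assert (Hss : s * s = x) by (apply sqrt_sqrt; lra).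
  assert (Hs1 : s <= 1) by (destruct (Rle_dec s 1); [auto|nra]).
  assert (Hlnx : ln x = 2 * ln s) by (rewrite <- Hss, ln_mult by lra; ring).
  assert (Hln : ln (/ s) <= / s - 1) by (apply ln_le_sub1, Rinv_0_lt_compat; lra).
  rewrite ln_Rinv in Hln by lra.
  assert (Hlnneg : ln s <= 0) by (rewrite <- ln_1; apply ln_le; lra).
  unfold xlnx. rewrite Rabs_left1 by (rewrite Hlnx; nra).
  rewrite Hlnx, <- Hss.
  assert (Hmul : s * (- ln s) <= s * / s) by (apply Rmult_le_compat_l; lra).
  rewrite Rinv_r in Hmul by lra. nra.
Qed.

Lemma xlnx_cont0 : continuity_pt xlnx 0.
Proof.
  unfold continuity_pt, continue_in, limit1_in, limit_in. intros eps Heps.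
  exists (Rmin 1 (eps * eps / 4)). split; [apply Rmin_pos; nra|].
  intros x [_ Hx]. simpl in *. unfold R_dist in *.
  replace (xlnx 0) with 0 by (unfold xlnx; ring).
  replace (x - 0) with x in Hx by ring. replace (xlnx x - 0) with (xlnx x) by ring.
  pose proof (Rmin_l 1 (eps * eps / 4)). pose proof (Rmin_r 1 (eps * eps / 4)).
  destruct (Rle_dec x 0) as [Hx0|Hx0].
  - assert (Hln : ln x = 0) by (unfold ln; destruct (Rlt_dec 0 x); [exfalso; lra|reflexivity]).
    unfold xlnx. rewrite Hln, Rmult_0_r, Rabs_R0. lra.
  - rewrite Rabs_right in Hx by lra.
    pose proof (xlnx_bound x ltac:(lra)).
    assert (sqrt x < eps / 2).
    { pose proof (sqrt_pos x). assert (sqrt x * sqrt x = x) by (apply sqrt_sqrt; lra). nra. }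
    lra.
Qed.

Lemma Ifun_cont x : 0 < x <= 1 -> continuity_pt Ifun x.
Proof.
  intros Hx. destruct (Req_dec x 1) as [->|Hx1].
  - apply (continuity_pt_ext (fun y => / 2 * ((1 + y) * ln (1 + y) + xlnx (1 - y))));
      [intros y; reflexivity|].
    assert (Hid : continuity_pt (fun y => y) 1)
      by apply derivable_continuous_pt, derivable_pt_id.
    assert (Hcst : forall k, continuity_pt (fun _ => k) 1)
      by (intros k; apply continuity_pt_const; intros u v; auto).
    apply continuity_pt_mult; [apply Hcst|]. apply continuity_pt_plus.
    + apply continuity_pt_mult; [apply continuity_pt_plus; auto|].
      apply (continuity_pt_comp (fun y => 1 + y) ln); [apply continuity_pt_plus; auto|].
      apply derivable_continuous_pt. exists (/ (1 + 1)). apply derivable_pt_lim_ln. lra.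
    + apply (continuity_pt_comp (fun y => 1 - y) xlnx); [apply continuity_pt_minus; auto|].
      replace (1 - 1) with 0 by ring. apply xlnx_cont0.
  - apply derivable_continuous_pt. eexists. apply Ifun_derive. lra.
Qed.

(* Derivatives of H.  Write p = 3 + q; on (-1,1)
     H'  = dH  = p beta x^(p-1) + h - artanh x,
     H'' = ddH = p (p-1) beta x^(p-2) - 1/(1-x^2),
   and the sign of H'' is that of  Nfun = (1-x^2) H''. *)
Definition dH (b h : R) (q : nat) (x : R) : R := (INR q + 3) * b * x ^ (q + 2) + h - artanh x.
Definition ddH (b : R) (q : nat) (x : R) : R :=
  (INR q + 3) * (INR q + 2) * b * x ^ (q + 1) - / (1 - x ^ 2).
Definition Nfun (b : R) (q : nat) (x : R) : R :=
  (INR q + 3) * (INR q + 2) * b * x ^ (q + 1) * (1 - x ^ 2) - 1.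
Definition dNfun (b : R) (q : nat) (x : R) : R :=
  (INR q + 3) * (INR q + 2) * b * x ^ q * ((INR q + 1) - (INR q + 3) * x ^ 2).

Lemma H_derive b h q x : -1 < x < 1 -> derivable_pt_lim (H b h (3 + q)) x (dH b h q x).
Proof.
  intros Hx. apply is_derive_Reals. unfold H, Ifun, dH, artanh. auto_derive.
  - repeat split; lra.
  - change (match q with 0%nat => 1 | S _ => INR q + 1 end) with (INR (S q)).
    rewrite S_INR, Nat.add_comm. simpl. replace (1 + - x) with (1 - x) by ring. field. lra.
Qed.

Lemma dH_derive b h q x : -1 < x < 1 -> derivable_pt_lim (dH b h q) x (ddH b q x).
Proof.
  intros Hx. apply is_derive_Reals. unfold dH, ddH, artanh. auto_derive.
  - repeat split; lra.
  - rewrite plus_INR. replace (Init.Nat.pred (q + 2)) with (q + 1)%nat by lia.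
    replace (INR 2) with 2 by (simpl; ring). replace (1 + - x) with (1 - x) by ring.
    field. repeat split; nra.
Qed.

Lemma Nfun_derive b q x : derivable_pt_lim (Nfun b q) x (dNfun b q x).
Proof.
  apply is_derive_Reals. unfold Nfun, dNfun. auto_derive; [auto|].
  rewrite plus_INR, Nat.add_1_r. simpl. ring.
Qed.

Lemma ddH_Nfun b q x : -1 < x < 1 -> ddH b q x = Nfun b q x / (1 - x ^ 2).
Proof. intros Hx. unfold ddH, Nfun. field. nra. Qed.

Lemma ddH_zero b q x : -1 < x < 1 -> ddH b q x = 0 -> Nfun b q x = 0.
Proof.
  intros Hx H0. rewrite ddH_Nfun in H0 by auto.
  assert (0 < 1 - x ^ 2) by nra.
  apply Rmult_integral in H0 as [H0|H0]; [auto|].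
  exfalso; apply (Rinv_neq_0_compat (1 - x ^ 2)); lra.
Qed.

Lemma Nfun0 b q : Nfun b q 0 = -1.
Proof. unfold Nfun. rewrite Nat.add_1_r. simpl. ring. Qed.

(* N' vanishes on each side of 0 only where x^2 = (p-2)/p, so by Rolle N has at
   most two zeros on any interval not containing 0. *)
Lemma Nfun_zeros_one_side b q lo hi : 0 <= b -> (0 <= lo \/ hi <= 0) ->
  atmost (fun x => lo < x < hi /\ Nfun b q x = 0) 2.
Proof.
  intros Hb Hside. pose proof (pos_INR q).
  destruct (Req_dec b 0) as [->|Hb0].
  { apply (atmost_weaken _ (fun _ => False) 0 2); [|lia|apply atmost_none; auto].
    intros x [_ Hk]. unfold Nfun in Hk. lra. }
  assert (HC : 0 < (INR q + 3) * (INR q + 2) * b) by (apply Rmult_lt_0_compat; nra).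
  assert (Hcrit : forall y, lo < y < hi -> dNfun b q y = 0 -> INR q + 1 = (INR q + 3) * y ^ 2).
  { intros y Hy Hd. assert (Hy0 : y <> 0) by lra. pose proof (pow_nonzero y q Hy0).
    unfold dNfun in Hd. apply Rmult_integral in Hd as [Hd|Hd]; [|lra].
    apply Rmult_integral in Hd as [Hd|Hd]; lra. }
  apply (atmost_weaken _ (fun x => lo < x < hi /\ lo <= x <= hi /\ Nfun b q x = 0) 2 2);
    [intros x [Hx Hk]; repeat split; auto; lra| lia|].
  apply (atmost_rolle (Nfun b q) (dNfun b q) lo hi lo hi 1); [intros x _; apply Nfun_derive|].
  apply atmost_unique. intros x y [Hx Hkx] [Hy Hky].
  apply Hcrit in Hkx; [|auto]. apply Hcrit in Hky; [|auto]. nra.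
Qed.

Lemma Nfun_neg_left b q x : 0 <= b -> Nat.Even q -> -1 < x < 0 -> Nfun b q x < 0.
Proof.
  intros Hb [r ->] Hx. unfold Nfun. pose proof (pos_INR (2 * r)).
  assert (x ^ (2 * r + 1) < 0).
  { rewrite pow_add, pow_mult, pow_1. assert (0 < (x ^ 2) ^ r) by (apply pow_lt; nra). nra. }
  assert (0 <= (INR (2 * r) + 3) * (INR (2 * r) + 2) * b) by (apply Rmult_le_pos; nra).
  assert (0 < 1 - x ^ 2) by nra.
  assert ((INR (2 * r) + 3) * (INR (2 * r) + 2) * b * x ^ (2 * r + 1) <= 0) by nra.
  nra.
Qed.

Lemma Nfun_zeros b q : 0 <= b ->
  atmost (fun x => -1 < x < 1 /\ Nfun b q x = 0) (if Nat.even q then 2 else 4).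
Proof.
  intros Hb.
  replace (if Nat.even q then 2 else 4)%nat with ((if Nat.even q then 0 else 2) + 2)%nat
    by (destruct (Nat.even q); reflexivity).
  apply atmost_split_sign.
  - destruct (Nat.even q) eqn:E.
    + apply atmost_none. intros x [[Hx Hk] Hx0]. apply Nat.even_spec in E.
      pose proof (Nfun_neg_left b q x Hb E ltac:(lra)). lra.
    + apply (atmost_weaken _ (fun x => -1 < x < 0 /\ Nfun b q x = 0) 2 2);
        [intros x [[Hx Hk] Hx0]; split; [lra|auto]| lia| apply Nfun_zeros_one_side; lra].
  - apply (atmost_weaken _ (fun x => 0 < x < 1 /\ Nfun b q x = 0) 2 2);
      [intros x [[Hx Hk] Hx0]; split; [lra|auto]| lia| apply Nfun_zeros_one_side; lra].
  - intros x [_ Hk] ->. rewrite Nfun0 in Hk. lra.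
Qed.

Lemma dH_zeros b h q : 0 <= b ->
  atmost (fun x => -1 < x < 1 /\ dH b h q x = 0) (if Nat.even q then 3 else 5).
Proof.
  intros Hb.
  apply (atmost_weaken _ (fun x => -1 < x < 1 /\ -1 <= x <= 1 /\ dH b h q x = 0)
           (S (if Nat.even q then 2 else 4)) _);
    [intros x [Hx Hf]; repeat split; auto; lra| destruct (Nat.even q); lia|].
  apply (atmost_rolle (dH b h q) (ddH b q)); [intros x Hx; apply dH_derive; auto|].
  apply (atmost_weaken _ (fun x => -1 < x < 1 /\ Nfun b q x = 0)
           (if Nat.even q then 2 else 4)%nat _); [| |apply Nfun_zeros, Hb].
  - intros x [Hx Hf]; split; [auto|apply ddH_zero; auto].
  - lia.
Qed.

Lemma dH_zeros_right b h q : 0 <= b ->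
  atmost (fun x => 0 <= x < 1 /\ dH b h q x = 0) 3.
Proof.
  intros Hb.
  apply (atmost_weaken _ (fun x => -1 < x < 1 /\ 0 <= x <= 1 /\ dH b h q x = 0) 3 3);
    [intros x [Hx Hf]; repeat split; auto; lra| lia|].
  apply (atmost_rolle (dH b h q) (ddH b q)); [intros x Hx; apply dH_derive; auto|].
  apply (atmost_weaken _ (fun x => 0 < x < 1 /\ Nfun b q x = 0) 2 2);
    [intros x [Hx Hf]; split; [auto|apply ddH_zero; [lra|auto]]| lia|].
  apply Nfun_zeros_one_side; lra.
Qed.


Lemma H_at_0 b h p : (1 <= p)%nat -> H b h p 0 = 0.
Proof. intros Hp. unfold H. rewrite Ifun0. destruct p; [lia|]. simpl. ring. Qed.

Lemma H_reflect b h p y : H b h p (- y) = H (b * (-1) ^ p) (- h) p y.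
Proof.
  unfold H. rewrite Ifun_even. replace (- y) with ((-1) * y) by ring.
  rewrite Rpow_mult_distr. ring.
Qed.

Lemma H_reflect_even b h p y : Nat.Even p -> H b h p (- y) = H b (- h) p y.
Proof. intros [r ->]. rewrite H_reflect, pow_1_even. f_equal. ring. Qed.

Lemma global_max_local b h p x : global_max b h p x -> local_max b h p x.
Proof. intros [Hx Hm]. split; [auto|]. exists 1; split; [lra|]. intros y Hy _; auto. Qed.

Lemma global_max_same_value b h p x y :
  global_max b h p x -> global_max b h p y -> H b h p x = H b h p y.
Proof. intros [Hx Gx] [Hy Gy]. apply Rle_antisym; auto. Qed.

Lemma global_max_reflect b h p x :
  Nat.Even p -> global_max b h p x -> global_max b (- h) p (- x).
Proof.
  intros He [Hx Gx]. split; [unfold in11 in *; lra|].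
  intros y Hy.
  rewrite <- (H_reflect_even b h p y He), (H_reflect_even b (- h) p x He), Ropp_involutive.
  apply Gx. unfold in11 in *; lra.
Qed.

(* Part (2): no local maximum at the endpoints, because I'(x) -> +oo as x -> 1.
   Quantitatively H(1) - H(1-t) <= t (|beta| p + |h| + ln(t)/2). *)

Lemma one_minus_pow_bound t p : 0 <= t <= 1 -> 0 <= 1 - (1 - t) ^ p <= INR p * t.
Proof.
  intros Ht. induction p as [|p IH]; [simpl; lra|].
  rewrite S_INR. simpl. pose proof (pow_le (1 - t) p ltac:(lra)).
  assert (Hle : (1 - t) ^ p <= 1 ^ p) by (apply pow_incr; lra). rewrite pow1 in Hle. nra.
Qed.

Lemma H_near_1 b h p t : 0 < t <= 1/2 ->
  H b h p 1 - H b h p (1 - t) <= t * (Rabs b * INR p + Rabs h + / 2 * ln t).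
Proof.
  intros Ht. unfold H. rewrite Ifun1, pow1. unfold Ifun.
  replace (1 + (1 - t)) with (2 - t) by ring. replace (1 - (1 - t)) with t by ring.
  pose proof (one_minus_pow_bound t p ltac:(lra)).
  assert (b * (1 - (1 - t) ^ p) <= Rabs b * (INR p * t)).
  { apply Rle_trans with (Rabs b * (1 - (1 - t) ^ p)).
    - apply Rmult_le_compat_r; [lra| apply Rle_abs].
    - apply Rmult_le_compat_l; [apply Rabs_pos| lra]. }
  assert (h * t <= Rabs h * t) by (apply Rmult_le_compat_r; [lra| apply Rle_abs]).
  assert (0 <= ln (2 - t)) by (rewrite <- ln_1; apply ln_le; lra).
  assert (ln (2 - t) <= ln 2) by (apply ln_le; lra).
  assert ((2 - t) * ln (2 - t) <= 2 * ln 2) by nra.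
  nra.
Qed.

Lemma one_not_local_max b h p : ~ local_max b h p 1.
Proof.
  intros [_ [eps [He Hm]]].
  set (K := Rabs b * INR p + Rabs h).
  assert (HK : 0 <= K)
    by (unfold K; pose proof (Rabs_pos b); pose proof (Rabs_pos h); pose proof (pos_INR p); nra).
  set (t := Rmin (eps / 2) (Rmin (1/2) (exp (- (2 * K + 2))))).
  assert (Ht0 : 0 < t) by (apply Rmin_pos; [lra| apply Rmin_pos; [lra| apply exp_pos]]).
  assert (Ht1 : t <= eps / 2) by apply Rmin_l.
  assert (Ht2 : t <= 1/2) by (eapply Rle_trans; [apply Rmin_r| apply Rmin_l]).
  assert (Ht3 : t <= exp (- (2 * K + 2))) by (eapply Rle_trans; [apply Rmin_r| apply Rmin_r]).
  assert (Hln : ln t <= - (2 * K + 2))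
    by (rewrite <- (ln_exp (- (2 * K + 2))); apply ln_le; auto).
  pose proof (H_near_1 b h p t ltac:(lra)) as Hn. fold K in Hn.
  assert (H b h p (1 - t) <= H b h p 1).
  { apply Hm; [unfold in11; lra|].
    replace (1 - t - 1) with (- t) by ring. rewrite Rabs_Ropp, Rabs_right; lra. }
  assert (t * (K + / 2 * ln t) <= t * (-1)) by (apply Rmult_le_compat_l; lra). lra.
Qed.

Lemma local_max_interior b h p x : local_max b h p x -> -1 < x < 1.
Proof.
  intros Hlm. pose proof Hlm as [Hx [eps [He Hm]]]. unfold in11 in Hx.
  destruct (Req_dec x 1) as [->|H1]; [exfalso; exact (one_not_local_max b h p Hlm)|].
  destruct (Req_dec x (-1)) as [->|H2]; [|lra].
  exfalso. apply (one_not_local_max (b * (-1) ^ p) (- h) p).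
  split; [unfold in11; lra|]. exists eps; split; [auto|].
  intros y Hy Hye. rewrite <- !H_reflect. replace (- (1)) with (-1) by ring. apply Hm.
  - unfold in11 in *; lra.
  - replace (- y - -1) with (- (y - 1)) by ring. rewrite Rabs_Ropp; auto.
Qed.

Lemma H_abs_even b p x : Nat.Even p -> H b 0 p (Rabs x) = H b 0 p x.
Proof.
  intros He. unfold Rabs. destruct (Rcase_abs x); [|reflexivity].
  rewrite H_reflect_even, Ropp_0 by auto. reflexivity.
Qed.

Lemma local_max_open b h p x : local_max b h p x -> open_local_max (H b h p) (-1) 1 x.
Proof.
  intros Hlm. pose proof (local_max_interior _ _ _ _ Hlm) as Hx.
  destruct Hlm as [_ [eps [He Hm]]]. split; [auto|]. exists eps; split; [auto|].
  intros y Hy. apply Hm. unfold in11; lra.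
Qed.

Lemma dH_at_0 b q : dH b 0 q 0 = 0.
Proof.
  unfold dH, artanh. rewrite pow_i by lia.
  replace (1 + 0) with 1 by ring. replace (1 - 0) with 1 by ring. ring.
Qed.

Lemma H_local_max_count b h q lo hi k : 0 <= b ->
  atmost (fun y => lo < y < hi /\ dH b h q y = 0) k ->
  forall l, NoDup l -> (forall x, In x l -> local_max b h (3 + q) x /\ lo < x < hi) ->
  (2 * length l <= S k)%nat.
Proof.
  intros Hb Hk l Hnd Hl.
  apply (local_max_count (H b h (3 + q)) (dH b h q) (-1) 1 lo hi _ k
           (fun y Hy => H_derive b h q y Hy) (dH_zeros b h q Hb) Hk l Hnd).
  intros x Hx. destruct (Hl x Hx) as [Hlm Hx']. split; [apply local_max_open|]; auto.
Qed.

Lemma local_max_at_most b h q l : 0 <= b -> NoDup l ->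
  (forall x, In x l -> local_max b h (3 + q) x) ->
  (length l <= (if Nat.even q then 2 else 3))%nat.
Proof.
  intros Hb Hnd Hl.
  assert (2 * length l <= S (if Nat.even q then 3 else 5))%nat; [|destruct (Nat.even q); lia].
  apply (H_local_max_count b h q (-1) 1 _ Hb (dH_zeros b h q Hb) l Hnd).
  intros x Hx. split; [auto| apply (local_max_interior b h (3 + q)); auto].
Qed.

Lemma right_local_max_at_most_two b h q l : 0 <= b -> NoDup l ->
  (forall x, In x l -> local_max b h (3 + q) x /\ 0 < x < 1) -> (length l <= 2)%nat.
Proof.
  intros Hb Hnd Hl.
  assert (2 * length l <= 4)%nat; [|lia].
  apply (H_local_max_count b h q 0 1 3 Hb); [|auto|auto].
  apply (atmost_weaken _ (fun x => 0 <= x < 1 /\ dH b h q x = 0) 3 3);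
    [|lia|apply dH_zeros_right, Hb].
  intros x [Hx Hd]; split; [lra|auto].
Qed.

(* For h = 0 the critical point 0 uses up one of the three in [0,1). *)
Lemma right_local_max_at_most_one_h0 b q l : 0 <= b -> NoDup l ->
  (forall x, In x l -> local_max b 0 (3 + q) x /\ 0 < x < 1) -> (length l <= 1)%nat.
Proof.
  intros Hb Hnd Hl.
  assert (2 * length l <= 3)%nat; [|lia].
  apply (H_local_max_count b 0 q 0 1 2 Hb); [|auto|auto].
  apply (atmost_weaken _ (fun x => (0 <= x < 1 /\ dH b 0 q x = 0) /\ x <> 0) 2 2);
    [intros x [Hx Hd]; repeat split; auto; lra| lia|].
  apply atmost_remove_point; [split; [lra|apply dH_at_0]| apply dH_zeros_right, Hb].
Qed.

Lemma Hsup_ge b h p x : in11 x -> Rbar_le (Finite (H b h p x)) (Hsup b h p).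
Proof.
  intros Hx. unfold Hsup.
  destruct (Lub_Rbar_correct (fun y => exists x, in11 x /\ y = H b h p x)) as [Hub _].
  apply Hub. exists x; auto.
Qed.

Lemma Hsup_attained b h p M x0 :
  (forall x, in11 x -> H b h p x <= M) -> in11 x0 -> H b h p x0 = M -> Hsup b h p = Finite M.
Proof.
  intros Hle Hx0 HM. unfold Hsup. apply is_lub_Rbar_unique. split.
  - intros y [x [Hx ->]]. simpl. auto.
  - intros l Hl. rewrite <- HM. apply Hl. exists x0; auto.
Qed.

Lemma Hsup_not_zero b h p x : in11 x -> 0 < H b h p x -> Hsup b h p <> Finite 0.
Proof. intros Hx Hpos E. pose proof (Hsup_ge b h p x Hx) as Hle. rewrite E in Hle. simpl in Hle. lra. Qed.

Lemma pow_le_cube x p : (3 <= p)%nat -> 0 <= x <= 1 -> x ^ p <= x ^ 3.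
Proof.
  intros Hp Hx. replace p with (3 + (p - 3))%nat by lia. rewrite pow_add.
  assert (Hle : x ^ (p - 3) <= 1 ^ (p - 3)) by (apply pow_incr; lra). rewrite pow1 in Hle.
  assert (0 <= x ^ 3) by (apply pow_le; lra). nra.
Qed.

(* A field h <> 0 makes H positive near 0, in the direction of h:
   H(x) >= |h| t - (1 + beta) t^2 for |x| = t small, since I(x) <= x^2. *)
Lemma H_positive_somewhere b h p : (3 <= p)%nat -> 0 <= b -> h <> 0 ->
  exists x, in11 x /\ 0 < H b h p x.
Proof.
  intros Hp Hb Hh.
  set (t := Rmin (1/2) (Rabs h / (2 * (1 + b)))).
  assert (Hah : 0 < Rabs h) by (apply Rabs_pos_lt; auto).
  assert (Ht0 : 0 < t) by (apply Rmin_pos; [lra| apply Rdiv_lt_0_compat; lra]).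
  assert (Ht1 : t <= 1/2) by apply Rmin_l.
  assert (Ht2 : (1 + b) * t <= Rabs h / 2).
  { pose proof (Rmin_r (1/2) (Rabs h / (2 * (1 + b)))) as Ht2. fold t in Ht2.
    apply (Rmult_le_compat_l (1 + b)) in Ht2; [|lra].
    replace ((1 + b) * (Rabs h / (2 * (1 + b)))) with (Rabs h / 2) in Ht2 by (field; lra).
    auto. }
  set (x := if Rlt_dec 0 h then t else - t).
  assert (Hx : Rabs x = t /\ h * x = Rabs h * t).
  { unfold x. destruct (Rlt_dec 0 h).
    - rewrite !Rabs_right; lra.
    - rewrite Rabs_Ropp, Rabs_right, Rabs_left1; lra. }
  destruct Hx as [Hax Hhx].
  assert (Hx11 : -1 < x < 1) by (unfold x; destruct (Rlt_dec 0 h); lra).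
  exists x. split; [unfold in11; lra|].
  unfold H. rewrite Hhx.
  pose proof (Ifun_le_sq x Hx11).
  assert (Hx2 : x ^ 2 = t ^ 2) by (unfold x; destruct (Rlt_dec 0 h); ring).
  assert (Hxp : Rabs (x ^ p) <= t ^ 2).
  { rewrite <- RPow_abs, Hax. pose proof (pow_le_cube t p Hp ltac:(lra)). simpl in *. nra. }
  assert (- (t ^ 2) <= x ^ p) by (apply Rabs_le_between in Hxp; lra).
  assert (- b * t ^ 2 <= b * x ^ p) by nra.
  simpl in *. nra.
Qed.

(* The threshold c_p: the minimum of I(x)/x^p over [1/2,1] bounds I(x)/x^p from
   below on all of (0,1], because c_p <= I(1) = ln 2 < 1 while
   x^p <= x^3 <= x^2/2 <= I(x) for x < 1/2. *)
Lemma threshold_exists p : (3 <= p)%nat -> exists c m, 0 < m <= 1 /\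
  Ifun m = c * m ^ p /\ (forall x, 0 < x <= 1 -> c * x ^ p <= Ifun x).
Proof.
  intros Hp. set (ratio := fun x => Ifun x / x ^ p).
  destruct (continuity_ab_min ratio (1/2) 1) as [m [Hmin Hm]]; [lra| |].
  { intros x Hx. apply (continuity_pt_ext (fun y => (Ifun / (fun y => y ^ p))%F y));
      [intros y; reflexivity|].
    apply continuity_pt_div; [apply Ifun_cont; lra| |apply pow_nonzero; lra].
    apply derivable_continuous_pt, derivable_pt_pow. }
  exists (ratio m), m.
  assert (Hmp : 0 < m ^ p) by (apply pow_lt; lra).
  split; [lra|]. split; [unfold ratio; field; lra|].
  intros x Hx. assert (Hxp : 0 < x ^ p) by (apply pow_lt; lra).
  destruct (Rle_dec (1/2) x).
  - pose proof (Hmin x ltac:(lra)) as Hle. unfold ratio at 2 in Hle.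
    apply (Rmult_le_compat_r (x ^ p)) in Hle; [|lra].
    replace (Ifun x / x ^ p * x ^ p) with (Ifun x) in Hle by (field; lra). auto.
  - assert (Hc1 : ratio m <= 1).
    { pose proof (Hmin 1 ltac:(lra)) as Hle. unfold ratio at 2 in Hle.
      rewrite Ifun1, pow1 in Hle. pose proof ln2_lt1. lra. }
    assert (0 <= ratio m) by (unfold ratio; apply Rdiv_le_0_compat; [apply Rlt_le, Ifun_pos|]; lra).
    pose proof (pow_le_cube x p Hp ltac:(lra)).
    pose proof (Ifun_ge_half_sq x ltac:(lra)).
    assert (x ^ 3 <= x ^ 2 / 2) by (simpl; nra).
    nra.
Qed.

Section Threshold.

Variables (p : nat) (c m : R).
Hypothesis p_ge3 : (3 <= p)%nat.
Hypothesis m_range : 0 < m <= 1.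
Hypothesis I_at_m : Ifun m = c * m ^ p.
Hypothesis I_above : forall x, 0 < x <= 1 -> c * x ^ p <= Ifun x.

Lemma threshold_pos : 0 < c.
Proof.
  assert (0 < m ^ p) by (apply pow_lt; lra).
  pose proof (Ifun_pos m ltac:(lra) ltac:(lra)). nra.
Qed.

Lemma H_nonpos_below_threshold b x : 0 <= b <= c -> in11 x -> H b 0 p x <= 0.
Proof.
  intros Hb Hx. unfold in11 in Hx.
  destruct (Req_dec x 0) as [->|Hx0]; [rewrite H_at_0 by lia; lra|].
  unfold H. rewrite <- (Ifun_abs x).
  assert (Hax : 0 < Rabs x <= 1) by (split; [apply Rabs_pos_lt; auto| apply Rabs_le; lra]).
  pose proof (I_above (Rabs x) Hax).
  assert (Hb1 : b * x ^ p <= b * Rabs (x ^ p)) by (apply Rmult_le_compat_l; [lra| apply Rle_abs]).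
  rewrite <- RPow_abs in Hb1.
  assert (0 <= Rabs x ^ p) by (apply pow_le; lra).
  assert (b * Rabs x ^ p <= c * Rabs x ^ p) by (apply Rmult_le_compat_r; lra).
  lra.
Qed.

Lemma Hsup_zero_iff b : 0 <= b -> (Hsup b 0 p = Finite 0 <-> b <= c).
Proof.
  intros Hb. split.
  - intros E. destruct (Rle_dec b c) as [?|Hbc]; [auto|]. exfalso.
    apply (Hsup_not_zero b 0 p m); [unfold in11; lra| |auto].
    unfold H. rewrite I_at_m. assert (0 < m ^ p) by (apply pow_lt; lra). nra.
  - intros Hbc. apply (Hsup_attained b 0 p 0 0); [| unfold in11; lra| apply H_at_0; lia].
    intros x Hx. apply H_nonpos_below_threshold; auto.
Qed.

Lemma beta_tilde_threshold : beta_tilde p = Finite c.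
Proof.
  pose proof threshold_pos as Hc.
  unfold beta_tilde. apply is_lub_Rbar_unique. split.
  - intros y [Hy E]. simpl. apply Hsup_zero_iff; auto.
  - intros l Hl. apply Hl. split; [lra|]. apply Hsup_zero_iff; lra.
Qed.

Lemma sup_statement b h : 0 <= b ->
  Rbar_le (Finite 0) (Hsup b h p) /\
  (Hsup b h p = Finite 0 <-> (Rbar_le (Finite b) (beta_tilde p) /\ h = 0)).
Proof.
  intros Hb. split.
  - rewrite <- (H_at_0 b h p) by lia. apply Hsup_ge. unfold in11; lra.
  - rewrite beta_tilde_threshold. simpl. split.
    + intros E. destruct (Req_dec h 0) as [->|Hh]; [split; [apply Hsup_zero_iff|]; auto|].
      exfalso. destruct (H_positive_somewhere b h p p_ge3 Hb Hh) as [x [Hx Hpos]].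
      exact (Hsup_not_zero b h p x Hx Hpos E).
    + intros [Hbc ->]. apply Hsup_zero_iff; auto.
Qed.

Lemma threshold_three_global_max : Nat.Even p ->
  exists x1 x2 x3, x1 <> x2 /\ x1 <> x3 /\ x2 <> x3 /\
    global_max c 0 p x1 /\ global_max c 0 p x2 /\ global_max c 0 p x3.
Proof.
  intros Hev. pose proof threshold_pos as Hc.
  assert (Hle : forall y, in11 y -> H c 0 p y <= 0)
    by (intros y Hy; apply H_nonpos_below_threshold; auto; lra).
  assert (Hm0 : H c 0 p m = 0) by (unfold H; rewrite I_at_m; ring).
  assert (Hgm : forall x, in11 x -> H c 0 p x = 0 -> global_max c 0 p x)
    by (intros x Hx E; split; [auto|]; intros y Hy; rewrite E; auto).
  exists 0, m, (- m). repeat split; try lra; apply Hgm; try (unfold in11; lra).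
  - apply H_at_0; lia.
  - rewrite H_reflect_even, Ropp_0; auto.
Qed.

Lemma threshold_le_of_zero b x : Nat.Even p -> in11 x -> x <> 0 -> H b 0 p x = 0 -> c <= b.
Proof.
  intros Hev Hx Hx0 E. rewrite <- H_abs_even in E by auto. unfold H in E.
  assert (Hax : 0 < Rabs x <= 1)
    by (split; [apply Rabs_pos_lt; auto| apply Rabs_le; unfold in11 in *; lra]).
  pose proof (I_above (Rabs x) Hax).
  assert (0 < Rabs x ^ p) by (apply pow_lt; lra).
  nra.
Qed.

End Threshold.

Lemma NoDup_three (x1 x2 x3 : R) :
  x1 <> x2 -> x1 <> x3 -> x2 <> x3 -> NoDup (x1 :: x2 :: x3 :: nil).
Proof.
  intros H12 H13 H23. repeat constructor; simpl; intuition.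
Qed.

Lemma even_3_plus q : Nat.Even (3 + q) <-> Nat.even q = false.
Proof.
  rewrite <- Nat.even_spec. change (Nat.even (3 + q)) with (Nat.even (S q)).
  rewrite Nat.even_succ. unfold Nat.odd. destruct (Nat.even q); simpl; split; congruence.
Qed.

(* For even p and h <> 0 every global maximizer has the sign of h: otherwise
   its reflection would be strictly better. *)
Lemma global_max_sign b h p x : (3 <= p)%nat -> 0 <= b -> Nat.Even p -> h <> 0 ->
  global_max b h p x -> 0 < h * x.
Proof.
  intros Hp Hb He Hh [Hx Hm].
  destruct (Req_dec x 0) as [->|Hx0].
  { exfalso. destruct (H_positive_somewhere b h p Hp Hb Hh) as [z [Hz Hpos]].
    specialize (Hm z Hz). rewrite H_at_0 in Hm by lia. lra. }
  assert (Href : H b h p (- x) = H b h p x - 2 * h * x)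
    by (rewrite H_reflect_even by auto; unfold H; ring).
  assert (h * x <> 0) by (intro E; apply Rmult_integral in E as [E|E]; auto).
  specialize (Hm (- x) ltac:(unfold in11 in *; lra)). lra.
Qed.

Lemma no_three_global_max_h_nonzero b h q x1 x2 x3 : 0 <= b -> Nat.Even (3 + q) -> h <> 0 ->
  x1 <> x2 -> x1 <> x3 -> x2 <> x3 ->
  global_max b h (3 + q) x1 -> global_max b h (3 + q) x2 -> global_max b h (3 + q) x3 -> False.
Proof.
  intros Hb Hev Hh H12 H13 H23.
  (* for h > 0 all three are local maxima in (0,1), one too many *)
  assert (Hposh : forall h' y1 y2 y3, 0 < h' -> y1 <> y2 -> y1 <> y3 -> y2 <> y3 ->
            global_max b h' (3 + q) y1 -> global_max b h' (3 + q) y2 ->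
            global_max b h' (3 + q) y3 -> False).
  { intros h' y1 y2 y3 Hh' D12 D13 D23 G1 G2 G3.
    assert (Hright : forall y, global_max b h' (3 + q) y ->
              local_max b h' (3 + q) y /\ 0 < y < 1).
    { intros y Gy. pose proof (global_max_sign b h' (3 + q) y ltac:(lia) Hb Hev ltac:(lra) Gy).
      pose proof (local_max_interior _ _ _ _ (global_max_local _ _ _ _ Gy)).
      split; [apply global_max_local; auto| split; [nra|lra]]. }
    assert (Hlen : (length (y1 :: y2 :: y3 :: nil) <= 2)%nat).
    { apply (right_local_max_at_most_two b h' q); [auto| apply NoDup_three; auto|].
      intros y [<-|[<-|[<-|[]]]]; apply Hright; auto. }
    simpl in Hlen. lia. }
  intros G1 G2 G3. destruct (Rlt_dec 0 h) as [Hpos|Hneg].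
  - exact (Hposh h x1 x2 x3 Hpos H12 H13 H23 G1 G2 G3).
  - apply (Hposh (- h) (- x1) (- x2) (- x3)); try lra; try (apply global_max_reflect; auto).
Qed.

Lemma global_max_abs b p x : Nat.Even p -> global_max b 0 p x -> global_max b 0 p (Rabs x).
Proof.
  intros Hev [Hx Gx]. split.
  - unfold in11 in *. pose proof (Rabs_pos x). apply Rabs_le in Hx. lra.
  - intros y Hy. rewrite H_abs_even by auto. auto.
Qed.

(* For h = 0 and even p, two global maximizers with different moduli would give
   two local maxima in (0,1). *)
Lemma global_max_same_modulus b q x y : 0 <= b -> Nat.Even (3 + q) -> x <> 0 -> y <> 0 ->
  global_max b 0 (3 + q) x -> global_max b 0 (3 + q) y -> Rabs x = Rabs y.
Proof.
  intros Hb Hev Hx0 Hy0 Gx Gy. destruct (Req_dec (Rabs x) (Rabs y)) as [?|Hne]; [auto|].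
  exfalso.
  assert (Hright : forall z, z <> 0 -> global_max b 0 (3 + q) z ->
            local_max b 0 (3 + q) (Rabs z) /\ 0 < Rabs z < 1).
  { intros z Hz0 Gz. pose proof (global_max_abs b _ z Hev Gz) as Ga.
    pose proof (local_max_interior _ _ _ _ (global_max_local _ _ _ _ Ga)).
    pose proof (Rabs_pos_lt z Hz0).
    split; [apply global_max_local; auto|lra]. }
  assert (Hlen : (length (Rabs x :: Rabs y :: nil) <= 1)%nat).
  { apply (right_local_max_at_most_one_h0 b q); [auto| |].
    - repeat constructor; simpl; intuition.
    - intros z [<-|[<-|[]]]; apply Hright; auto. }
  simpl in Hlen. lia.
Qed.

(* Hence, for h = 0 and even p, three distinct global maximizers include 0, and
   the maximal value is H(0) = 0. *)
Lemma three_global_max_value_zero b q x1 x2 x3 : 0 <= b -> Nat.Even (3 + q) ->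
  x1 <> x2 -> x1 <> x3 -> x2 <> x3 ->
  global_max b 0 (3 + q) x1 -> global_max b 0 (3 + q) x2 -> global_max b 0 (3 + q) x3 ->
  forall x, global_max b 0 (3 + q) x -> H b 0 (3 + q) x = 0.
Proof.
  intros Hb Hev H12 H13 H23 G1 G2 G3 x Gx.
  assert (Hzero : exists z, global_max b 0 (3 + q) z /\ z = 0).
  { destruct (Req_dec x1 0) as [E|N1]; [exists x1; auto|].
    destruct (Req_dec x2 0) as [E|N2]; [exists x2; auto|].
    destruct (Req_dec x3 0) as [E|N3]; [exists x3; auto|].
    exfalso.
    pose proof (global_max_same_modulus b q x1 x2 Hb Hev N1 N2 G1 G2) as E12.
    pose proof (global_max_same_modulus b q x1 x3 Hb Hev N1 N3 G1 G3) as E13.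
    revert E12 E13. unfold Rabs.
    destruct (Rcase_abs x1), (Rcase_abs x2), (Rcase_abs x3); intros; lra. }
  destruct Hzero as [z [Gz ->]].
  rewrite (global_max_same_value _ _ _ x 0 Gx Gz). apply H_at_0. lia.
Qed.

Lemma three_global_max_iff q c m b h : 0 <= b -> 0 < m <= 1 ->
  Ifun m = c * m ^ (3 + q) -> (forall x, 0 < x <= 1 -> c * x ^ (3 + q) <= Ifun x) ->
  (exists x1 x2 x3, x1 <> x2 /\ x1 <> x3 /\ x2 <> x3 /\
     global_max b h (3 + q) x1 /\ global_max b h (3 + q) x2 /\ global_max b h (3 + q) x3)
  <-> ((4 <= 3 + q)%nat /\ Nat.Even (3 + q) /\ h = 0 /\ b = c).
Proof.
  intros Hb Hm Hmc Hcx. split.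
  - intros [x1 [x2 [x3 [H12 [H13 [H23 [G1 [G2 G3]]]]]]]].
    assert (Hev : Nat.Even (3 + q)).
    { apply even_3_plus.
      pose proof (local_max_at_most b h q _ Hb (NoDup_three x1 x2 x3 H12 H13 H23)) as Hc.
      destruct (Nat.even q); [|reflexivity]. exfalso.
      assert (Hlen : (length (x1 :: x2 :: x3 :: nil) <= 2)%nat)
        by (apply Hc; intros y [<-|[<-|[<-|[]]]]; apply global_max_local; auto).
      simpl in Hlen. lia. }
    assert (Hh : h = 0).
    { destruct (Req_dec h 0) as [?|Hh]; [auto|]. exfalso.
      exact (no_three_global_max_h_nonzero b h q x1 x2 x3 Hb Hev Hh H12 H13 H23 G1 G2 G3). }
    subst h.
    pose proof (three_global_max_value_zero b q x1 x2 x3 Hb Hev H12 H13 H23 G1 G2 G3) as Hval.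
    assert (Hbc : b <= c).
    { apply (Hsup_zero_iff (3 + q) c m ltac:(lia) Hm Hmc Hcx b Hb).
      destruct G1 as [Hx1 Gx1]. pose proof (Hval x1 (conj Hx1 Gx1)) as E.
      apply (Hsup_attained b 0 (3 + q) 0 x1); [|auto|auto].
      intros y Hy. specialize (Gx1 y Hy). lra. }
    assert (Hcb : c <= b).
    { destruct (Req_dec x1 0) as [->|N1].
      - apply (threshold_le_of_zero (3 + q) c Hcx b x2 Hev); [apply G2|auto|apply Hval; auto].
      - apply (threshold_le_of_zero (3 + q) c Hcx b x1 Hev); [apply G1|auto|apply Hval; auto]. }
    repeat split; [destruct Hev as [r Hr]; lia| auto| lra].
  - intros [_ [Hev [-> ->]]]. apply (threshold_three_global_max (3 + q) c m ltac:(lia) Hm Hmc Hcx Hev).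
Qed.

Theorem mainTheorem9 (p : nat) (hp : (3 <= p)%nat) (beta h : R) (hbeta : 0 <= beta) :
  (* (1) *)
  (Rbar_le (Finite 0) (Hsup beta h p) /\
   (Hsup beta h p = Finite 0 <->
      (Rbar_le (Finite beta) (beta_tilde p) /\ h = 0))) /\
  (* (2) *)
  (forall x, local_max beta h p x -> -1 < x < 1) /\
  (* (3) *)
  (forall l : list R, NoDup l -> (forall x, In x l -> local_max beta h p x) ->
     (length l <= (if Nat.eqb p 3 then 2 else 3))%nat) /\
  ((exists x1 x2 x3, x1 <> x2 /\ x1 <> x3 /\ x2 <> x3 /\
      global_max beta h p x1 /\ global_max beta h p x2 /\ global_max beta h p x3)
   <-> ((4 <= p)%nat /\ Nat.Even p /\ h = 0 /\ Finite beta = beta_tilde p)).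
Proof.
  destruct (threshold_exists p hp) as [c [m [Hm [Hmc Hcx]]]].
  split; [exact (sup_statement p c m hp Hm Hmc Hcx beta h hbeta)|].
  split; [exact (local_max_interior beta h p)|].
  rewrite (beta_tilde_threshold p c m hp Hm Hmc Hcx).
  replace p with (3 + (p - 3))%nat in * by lia. set (q := (p - 3)%nat) in *.
  split.
  - intros l Hnd Hl. pose proof (local_max_at_most beta h q l hbeta Hnd Hl).
    destruct q as [|q']; [simpl in *; lia|].
    replace (Nat.eqb (3 + S q') 3) with false by (symmetry; apply Nat.eqb_neq; lia).
    destruct (Nat.even (S q')); lia.
  - rewrite (three_global_max_iff q c m beta h hbeta Hm Hmc Hcx).
    split; intros [H4 [Hev [Hh Hb]]]; repeat split; auto; congruence.
Qed.
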